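(* Let $\mu_n$ be the probability measure on the set of $(n,m,d_1,d_2)$-biregular bipartite graphs induced (via the incidence map) by a uniformly random $(d_1,d_2)$-regular hypergraph on $n$ vertices, and let $\mu_n'$ be the uniform measure on the set of all $(n,m,d_1,d_2)$-biregular bipartite graphs. Then $$d_{\mathrm{TV}}(\mu_n,\mu_n')\leq\left(\frac{nd_1}{d_2}\right)^2\left(\frac{4ed_2}{n}\right)^{d_2}.$$
   Context: An $(n,m,d_1,d_2)$-biregular bipartite graph is a simple bipartite graph on $V_1=[n]$, $V_2=[m]$ with all degrees in $V_1$ equal to $d_1$ and in $V_2$ equal to $d_2$, $m=nd_1/d_2$. A $(d_1,d_2)$-regular hypergraph is a hypergraph without repeated hyperedges in which every hyperedge has exactly $d_2$ vertices and every vertex lies in exactly $d_1$ hyperedges; here the vertex set is $[n]$ and the $m=nd_1/d_2$ hyperedges are labeled $e_1,\dots,e_m$; a random one is uniform among all such. The incidence map sends a hypergraph $H$ to the bipartite graph on $V_1=[n]$, $V_2=\{e_1,\dots,e_m\}$ with $i\sim e_j$ iff $i\in e_j$; it is a bijection onto the set of biregular bipartite graphs in which no two vertices of $V_2$ have the same neighborhood. *)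

From HB Require Import structures.
From mathcomp Require Import all_boot all_order all_algebra.
From mathcomp Require Import all_classical all_reals all_analysis.
Set Implicit Arguments. Unset Strict Implicit. Unset Printing Implicit Defensive.
Import Order.TTheory GRing.Theory Num.Theory.
Local Open Scope ring_scope.

Definition bigraph (n m : nat) := {set 'I_n * 'I_m}.

Definition biregular (n m d1 d2 : nat) (G : bigraph n m) : bool :=
  [forall i : 'I_n, #|[set j : 'I_m | (i, j) \in G]| == d1] &&
  [forall j : 'I_m, #|[set i : 'I_n | (i, j) \in G]| == d2].

(* A hypergraph on vertex set [n] with m labeled hyperedges e_1..e_m. *)
Definition hypergraph (n m : nat) := {ffun 'I_m -> {set 'I_n}}.

Definition regular_hypergraph (n m d1 d2 : nat) (H : hypergraph n m) : bool :=
  injectiveb H &&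
  [forall j : 'I_m, #|H j| == d2] &&
  [forall i : 'I_n, #|[set j : 'I_m | i \in H j]| == d1].

Definition incidence (n m : nat) (H : hypergraph n m) : bigraph n m :=
  [set p : 'I_n * 'I_m | p.1 \in H p.2].

Definition mu_hyp (R : realType) (n m d1 d2 : nat) (G : bigraph n m) : R :=
  (#|[set H : hypergraph n m | regular_hypergraph d1 d2 H && (incidence H == G)]|%:R)
  / (#|[set H : hypergraph n m | regular_hypergraph d1 d2 H]|%:R).

Definition mu_unif (R : realType) (n m d1 d2 : nat) (G : bigraph n m) : R :=
  (G \in [set G' : bigraph n m | biregular d1 d2 G'])%:R
  / (#|[set G' : bigraph n m | biregular d1 d2 G']|%:R).

Definition dTV (R : realType) (T : finType) (mu nu : T -> R) : R :=
  2^-1 * \sum_(x : T) `|mu x - nu x|.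

From HB Require Import structures.
From mathcomp Require Import all_boot all_order all_algebra perm.
From mathcomp Require Import all_classical all_reals all_analysis.
From mathcomp Require Import zify ring lra.
Import Order.TTheory GRing.Theory Num.Theory.
Local Open Scope ring_scope.
Set Implicit Arguments. Unset Strict Implicit. Unset Printing Implicit Defensive.

(* The incidence map is injective and its image is the set of biregular graphs
   in which no two vertices of V2 are twins (have the same neighbourhood), so
   mu_n is uniform on a subset of the support of mu_n' and the distance is the
   proportion of biregular graphs having twins j <> k.  For fixed j <> k let
   C_t be the biregular graphs in which j and k have t common neighbours.  The
   switching that picks s in N(j) /\ N(k) and an edge ul with u outside
   N(j) \/ N(k) and l outside N(s), and replaces the edges sk, ul by sl, uk,
   maps C_t to C_(t-1); a graph of C_t admits at least t (n - 3 d2) d1 such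
   switchings and a graph of C_(t-1) is reached by at most d2 d1 d2 of them, so
   |C_t| t (n - 3 d2) <= |C_(t-1)| d2^2.  Iterating from t = d2 and using
   d2^d2 <= d2! e^d2 and n <= 4 (n - 3 d2) (for 4 d2 <= n; otherwise the bound
   exceeds 1) gives |C_d2| <= (4 e d2 / n)^d2 times the number of biregular
   graphs, and a union bound over the m^2 pairs (j, k) concludes. *)


Section PairCounting.
Local Open Scope nat_scope.
Variables A B : finType.

Lemma card_setX_dep (X : {set A}) (F : A -> {set B}) :
  #|[set z : A * B | (z.1 \in X) && (z.2 \in F z.1)]| = \sum_(a in X) #|F a|.
Proof.
rewrite -sum1_card; under [RHS]eq_bigr do rewrite -sum1_card.
by rewrite pair_big_dep; apply: eq_bigl => z; rewrite !inE.
Qed.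

Lemma card_setX_dep_snd (Y : {set B}) (F : B -> {set A}) :
  #|[set z : A * B | (z.2 \in Y) && (z.1 \in F z.2)]| = \sum_(b in Y) #|F b|.
Proof.
rewrite -sum1_card; under [RHS]eq_bigr do rewrite -sum1_card.
rewrite (exchange_big_dep predT) //= pair_big_dep.
by apply: eq_bigl => z; rewrite !inE.
Qed.

End PairCounting.

Section Neighbourhoods.
Local Open Scope nat_scope.
Variables n m : nat.

Definition nbhd1 (G : bigraph n m) (i : 'I_n) : {set 'I_m} := [set l | (i, l) \in G].
Definition nbhd2 (G : bigraph n m) (l : 'I_m) : {set 'I_n} := [set i | (i, l) \in G].

Lemma biregularP d1 d2 (G : bigraph n m) :
  reflect ((forall i, #|nbhd1 G i| = d1) /\ (forall l, #|nbhd2 G l| = d2))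
          (biregular d1 d2 G).
Proof.
apply: (iffP andP) => [[/forallP h1 /forallP h2] | [h1 h2]].
  by split=> x; apply/eqP; [exact: h1 | exact: h2].
by split; apply/forallP => x; apply/eqP; [exact: h1 | exact: h2].
Qed.

Variables (d1 d2 : nat) (G : bigraph n m).
Hypothesis bG : biregular d1 d2 G.

Lemma card_nbhd1 i : #|nbhd1 G i| = d1.
Proof. by case/biregularP: bG. Qed.

Lemma card_nbhd2 l : #|nbhd2 G l| = d2.
Proof. by case/biregularP: bG. Qed.

Lemma card_edges_from1 (X : {set 'I_n}) : #|[set e in G | e.1 \in X]| = #|X| * d1.
Proof.
have -> : [set e in G | e.1 \in X] = [set e | (e.1 \in X) && (e.2 \in nbhd1 G e.1)].
  by apply/setP => -[i l]; rewrite !inE andbC.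
by rewrite card_setX_dep (eq_bigr (fun=> d1)) ?sum_nat_const // => i _; apply: card_nbhd1.
Qed.

Lemma card_edges_into2 (Y : {set 'I_m}) : #|[set e in G | e.2 \in Y]| = #|Y| * d2.
Proof.
have -> : [set e in G | e.2 \in Y] = [set e | (e.2 \in Y) && (e.1 \in nbhd2 G e.2)].
  by apply/setP => -[i l]; rewrite !inE andbC.
by rewrite card_setX_dep_snd (eq_bigr (fun=> d2)) ?sum_nat_const // => l _; apply: card_nbhd2.
Qed.

Lemma card_edges : #|G| = n * d1.
Proof.
have -> : n * d1 = #|[set: 'I_n]| * d1 by rewrite cardsT card_ord.
by rewrite -card_edges_from1; apply: eq_card => e; rewrite !inE andbT.
Qed.

Lemma card_edges_avoiding (X Y : {set 'I_n}) (Z : {set 'I_m}) :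
  n * d1 <= #|[set e in G | [&& e.1 \notin X, e.1 \notin Y & e.2 \notin Z]]|
            + (#|X| + #|Y|) * d1 + #|Z| * d2.
Proof.
set F := [set e in G | _].
rewrite -card_edges mulnDl -!card_edges_from1 -card_edges_into2 -!addnA.
have cover : G \subset F :|: ([set e in G | e.1 \in X]
                  :|: ([set e in G | e.1 \in Y] :|: [set e in G | e.2 \in Z])).
  apply/fintype.subsetP => e eG; rewrite !inE eG /=.
  by case: (e.1 \in X); case: (e.1 \in Y); case: (e.2 \in Z).
apply: leq_trans (subset_leq_card cover) _.
by do 2 (apply: leq_trans (leq_card_setU _ _) _; rewrite leq_add2l); apply: leq_card_setU.
Qed.

End Neighbourhoods.

Section Switching.
Local Open Scope nat_scope.
Variables (n m : nat) (s u : 'I_n) (k l : 'I_m).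

Definition col_swap (e : 'I_n * 'I_m) : 'I_n * 'I_m :=
  if (e.1 == s) || (e.1 == u) then (e.1, tperm k l e.2) else e.

Definition row_swap (e : 'I_n * 'I_m) : 'I_n * 'I_m :=
  if (e.2 == k) || (e.2 == l) then (tperm s u e.1, e.2) else e.

Definition switchable (G : bigraph n m) : bool :=
  [&& (s, k) \in G, (u, l) \in G, (s, l) \notin G & (u, k) \notin G].

(* On a switchable graph, [switch] deletes the edges sk, ul and inserts sl, uk. *)
Definition switch (G : bigraph n m) : bigraph n m := col_swap @^-1: G.

Lemma col_swapK : involutive col_swap.
Proof.
by move=> [i c]; rewrite /col_swap /=; case h: ((i == s) || (i == u)); rewrite /= h ?tpermK.
Qed.

Lemma switchK : involutive switch.
Proof. by move=> G; apply/setP => e; rewrite !inE col_swapK. Qed.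

Lemma nbhd1_preim_col_swap (G : bigraph n m) i :
  nbhd1 (col_swap @^-1: G) i =
  if (i == s) || (i == u) then tperm k l @^-1: nbhd1 G i else nbhd1 G i.
Proof. by apply/setP => c; rewrite !inE /col_swap /=; case: ifP; rewrite !inE. Qed.

Lemma nbhd2_preim_row_swap (G : bigraph n m) c :
  nbhd2 (row_swap @^-1: G) c =
  if (c == k) || (c == l) then tperm s u @^-1: nbhd2 G c else nbhd2 G c.
Proof. by apply/setP => i; rewrite !inE /row_swap /=; case: ifP; rewrite !inE. Qed.

(* The pattern of a switchable graph on {s, u} x {k, l} is a permutation
   matrix, so swapping its rows has the same effect as swapping its columns. *)
Lemma switch_row_swap (G : bigraph n m) : switchable G -> switch G = row_swap @^-1: G.
Proof.
case/and4P=> sk ul sl uk.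
have su : s != u by apply: contraNneq sl => ->.
apply/setP => -[i c]; rewrite !inE /col_swap /row_swap /=.
have [->|ns] := eqVneq i s; [|have [->|nu] := eqVneq i u];
  (have [->|nk] := eqVneq c k; [|have [->|nl] := eqVneq c l]);
  rewrite ?eqxx ?orbT ?(negPf su) ?(negPf ns) ?(negPf nu) ?(negPf nk) ?(negPf nl) /=;
  by rewrite ?tpermL ?tpermR ?(negPf sl) ?(negPf uk) ?sk ?ul // tpermD // eq_sym.
Qed.

Lemma card_nbhd1_switch (G : bigraph n m) i : #|nbhd1 (switch G) i| = #|nbhd1 G i|.
Proof.
by rewrite nbhd1_preim_col_swap; case: ifP => _; rewrite ?card_preimset //; apply: perm_inj.
Qed.

Lemma card_nbhd2_switch (G : bigraph n m) c :
  switchable G -> #|nbhd2 (switch G) c| = #|nbhd2 G c|.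
Proof.
move=> sw; rewrite switch_row_swap // nbhd2_preim_row_swap.
by case: ifP => _; rewrite ?card_preimset //; apply: perm_inj.
Qed.

Lemma switch_biregular d1 d2 (G : bigraph n m) :
  switchable G -> biregular d1 d2 G -> biregular d1 d2 (switch G).
Proof.
move=> sw /biregularP[h1 h2]; apply/biregularP.
by split=> x; rewrite (card_nbhd1_switch, card_nbhd2_switch).
Qed.

Lemma codegree_switch (G : bigraph n m) j :
  switchable G -> j != k -> j != l -> (u, j) \notin G ->
  nbhd2 (switch G) j :&: nbhd2 (switch G) k = (nbhd2 G j :&: nbhd2 G k) :\ s.
Proof.
move=> sw jk jl uj; have /and4P[_ _ _ uk] := sw.
rewrite switch_row_swap // !nbhd2_preim_row_swap eqxx (negPf jk) (negPf jl) /=.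
apply/setP => i; rewrite !inE.
have [->|ns] := eqVneq i s; first by rewrite tpermL (negPf uk) andbF.
have [->|nu] := eqVneq i u; first by rewrite (negPf uj).
by rewrite tpermD // eq_sym.
Qed.

End Switching.

Section CodegreeSwitching.
Local Open Scope nat_scope.
Variables (n m d1 d2 : nat) (j k : 'I_m).
Hypothesis jk : j != k.

Definition codegree_class (t : nat) : {set bigraph n m} :=
  [set G | biregular d1 d2 G & #|nbhd2 G j :&: nbhd2 G k| == t].

(* x = (s, (u, l)) encodes the switching that removes s from the common
   neighbourhood of j and k; afterwards the graph has the edges sj, uk and sl,
   which is all that [bwd_switching] records. *)
Definition fwd_switching (G : bigraph n m) (x : 'I_n * ('I_n * 'I_m)) : bool :=
  let: (s, (u, l)) := x in
  [&& (s, j) \in G, (s, k) \in G, (u, l) \in G,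
      (u, j) \notin G, (u, k) \notin G & (s, l) \notin G].

Definition bwd_switching (G : bigraph n m) (x : 'I_n * ('I_n * 'I_m)) : bool :=
  let: (s, (u, l)) := x in [&& (s, j) \in G, (u, k) \in G & (s, l) \in G].

Definition switch_at (G : bigraph n m) (x : 'I_n * ('I_n * 'I_m)) : bigraph n m :=
  let: (s, (u, l)) := x in switch s u k l G.

Lemma fwd_switchingP G s u l : fwd_switching G (s, (u, l)) ->
  [/\ switchable s u k l G, j != l & (u, j) \notin G].
Proof.
case/and5P=> _ sk ul uj /andP[uk sl]; split=> //; first exact/and4P.
by apply: contraNneq uj => ->.
Qed.

Lemma switch_at_codegree_class t G x :
  G \in codegree_class t -> fwd_switching G x -> switch_at G x \in codegree_class t.-1.
Proof.
case: x => s [u l]; rewrite !inE => /andP[bG /eqP <-] fw.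
have [sw jl uj] := fwd_switchingP fw; case/andP: fw => sj /andP[sk _].
by rewrite switch_biregular //= codegree_switch // [in X in _ == X](cardsD1 s) !inE sj sk.
Qed.

Lemma bwd_switch_at G x : fwd_switching G x -> bwd_switching (switch_at G x) x.
Proof.
case: x => s [u l] fw; have [_ jl _] := fwd_switchingP fw.
case/and5P: fw => sj sk ul _ _.
by rewrite /= !inE /col_swap /= !eqxx orbT /= tpermL tpermR sk ul tpermD ?sj // eq_sym.
Qed.

Lemma card_fwd_switching_ge G : biregular d1 d2 G ->
  #|nbhd2 G j :&: nbhd2 G k| * ((n - 3 * d2) * d1) <= #|[set x | fwd_switching G x]|.
Proof.
move=> bG.
pose avoid s := [set e in G | [&& e.1 \notin nbhd2 G j, e.1 \notin nbhd2 G k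
                                 & e.2 \notin nbhd1 G s]].
have -> : [set x | fwd_switching G x] =
          [set x | (x.1 \in nbhd2 G j :&: nbhd2 G k) && (x.2 \in avoid x.1)].
  by apply/setP => -[s [u l]]; rewrite !inE /= -!andbA.
rewrite card_setX_dep -sum_nat_const; apply: leq_sum => s _.
have := card_edges_avoiding bG (nbhd2 G j) (nbhd2 G k) (nbhd1 G s).
rewrite -/(avoid s) (card_nbhd1 bG) !(card_nbhd2 bG) mulnBl leq_subLR.
by move: #|avoid s| => a; nia.
Qed.

Lemma card_bwd_switching_le G : biregular d1 d2 G ->
  #|[set x | bwd_switching G x]| <= d2 * (d2 * d1).
Proof.
move=> bG.
have -> : [set x | bwd_switching G x] =
          [set x | (x.1 \in nbhd2 G j) && (x.2 \in finset.setX (nbhd2 G k) (nbhd1 G x.1))].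
  by apply/setP => -[s [u l]]; rewrite !inE.
rewrite (card_setX_dep _ (fun s => finset.setX (nbhd2 G k) (nbhd1 G s)))
  (eq_bigr (fun=> d2 * d1)) ?sum_nat_const ?(card_nbhd2 bG) //.
by move=> s _; rewrite cardsX (card_nbhd1 bG) (card_nbhd2 bG).
Qed.

Lemma switch_atK G x : switch_at (switch_at G x) x = G.
Proof. by case: x => s [u l]; apply: switchK. Qed.

Lemma card_codegree_class_step t : 0 < d1 ->
  #|codegree_class t.+1| * (t.+1 * (n - 3 * d2)) <= #|codegree_class t| * d2 ^ 2.
Proof.
move=> d1_gt0.
pose Dom := [set z | (z.1 \in codegree_class t.+1) && (z.2 \in [set x | fwd_switching z.1 x])].
pose Cod := [set z | (z.1 \in codegree_class t) && (z.2 \in [set x | bwd_switching z.1 x])].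
pose phi z := (switch_at z.1 z.2, z.2).
have phi_inj : injective phi.
  move=> [G1 x1] [G2 x2] [eG ex]; subst x2.
  by rewrite -(switch_atK G1 x1) eG switch_atK.
have phi_Dom : phi @: Dom \subset Cod.
  apply/fintype.subsetP => _ /imsetP[[G x] + ->]; rewrite finset.in_set => /andP[GC].
  rewrite inE => fw; rewrite finset.in_set /=.
  by rewrite (switch_at_codegree_class GC fw) inE bwd_switch_at.
have lower : #|codegree_class t.+1| * (t.+1 * ((n - 3 * d2) * d1)) <= #|Dom|.
  rewrite (card_setX_dep _ (fun G => [set x | fwd_switching G x])) -sum_nat_const.
  apply: leq_sum => G; rewrite inE => /andP[bG /eqP codeg].
  by rewrite -{1}codeg; apply: card_fwd_switching_ge.
have upper : #|Cod| <= #|codegree_class t| * (d2 * (d2 * d1)).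
  rewrite (card_setX_dep _ (fun G => [set x | bwd_switching G x])) -sum_nat_const.
  by apply: leq_sum => G; rewrite inE => /andP[bG _]; apply: card_bwd_switching_le.
have := subset_leq_card phi_Dom; rewrite card_imset // => Dom_Cod.
have := leq_trans lower (leq_trans Dom_Cod upper); rewrite -(leq_pmul2r d1_gt0).
move: #|codegree_class _| #|codegree_class _| => a b; nia.
Qed.

Lemma card_codegree_class_le t : 0 < d1 ->
  #|codegree_class t| * (t`! * (n - 3 * d2) ^ t) <= #|codegree_class 0| * (d2 ^ 2) ^ t.
Proof.
move=> d1_gt0; elim: t => [|t IH]; first by rewrite fact0 !expn0 !muln1.
have -> : #|codegree_class t.+1| * (t.+1`! * (n - 3 * d2) ^ t.+1)
        = #|codegree_class t.+1| * (t.+1 * (n - 3 * d2)) * (t`! * (n - 3 * d2) ^ t).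
  by rewrite factS expnS; ring.
apply: leq_trans (leq_mul (card_codegree_class_step t d1_gt0) (leqnn _)) _.
by rewrite mulnAC [(d2 ^ 2) ^ t.+1]expnSr [X in _ <= X]mulnA leq_mul2r IH orbT.
Qed.

End CodegreeSwitching.

Section Twins.
Local Open Scope nat_scope.
Variables n m d1 d2 : nat.

Definition biregular_graphs : {set bigraph n m} := [set G | biregular d1 d2 G].

Definition twinned (j k : 'I_m) : {set bigraph n m} :=
  [set G | biregular d1 d2 G & nbhd2 G j == nbhd2 G k].

Lemma card_twinned_le j k : j != k -> 0 < d1 ->
  #|twinned j k| * (d2`! * (n - 3 * d2) ^ d2) <= #|biregular_graphs| * (d2 ^ 2) ^ d2.
Proof.
move=> jk d1_gt0.
have twinned_sub : twinned j k \subset codegree_class n d1 d2 j k d2.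
  apply/fintype.subsetP => G; rewrite !inE => /andP[bG /eqP ->].
  by rewrite bG finset.setIid (card_nbhd2 bG) eqxx.
have class0_sub : codegree_class n d1 d2 j k 0 \subset biregular_graphs.
  by apply/fintype.subsetP => G; rewrite !inE => /andP[].
apply: leq_trans (leq_mul (subset_leq_card twinned_sub) (leqnn _)) _.
apply: leq_trans (card_codegree_class_le n d2 jk d2 d1_gt0) _.
by rewrite leq_mul2r subset_leq_card ?orbT.
Qed.

Lemma card_twinned_mul_le j k : j != k -> 0 < d1 -> 0 < d2 -> 4 * d2 <= n ->
  #|twinned j k| * n ^ d2 * d2`! <= #|biregular_graphs| * (4 * d2) ^ d2 * d2 ^ d2.
Proof.
move=> jk d1_gt0 d2_gt0 le_4d2_n.
have le_n : n ^ d2 <= 4 ^ d2 * (n - 3 * d2) ^ d2 by rewrite -expnMn leq_exp2r //; lia.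
have sq : (d2 ^ 2) ^ d2 = d2 ^ d2 * d2 ^ d2 by rewrite -expnMn.
have := leq_mul (leqnn (4 ^ d2)) (card_twinned_le jk d1_gt0).
have := leq_mul (leq_mul (leqnn #|twinned j k|) le_n) (leqnn d2`!).
rewrite sq expnMn.
move: #|twinned j k| #|biregular_graphs| (n ^ d2) (4 ^ d2) ((n - 3 * d2) ^ d2) (d2 ^ d2) d2`!.
by move=> T B N F Q D f; nia.
Qed.

End Twins.

Lemma dTV_uniform_subset (R : realType) (T : finType) (A B : {set T}) (mu nu : T -> R) :
  A \subset B -> (0 < #|A|)%N ->
  mu =1 (fun x => (x \in A)%:R / #|A|%:R) -> nu =1 (fun x => (x \in B)%:R / #|B|%:R) ->
  dTV mu nu = #|B :\: A|%:R / #|B|%:R.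
Proof.
move=> AB A_gt0 muE nuE; have A_le_B := subset_leq_card AB.
have B_gt0 : (0 < #|B|)%N := leq_trans A_gt0 A_le_B.
have dist x : `|(x \in A)%:R / #|A|%:R - (x \in B)%:R / #|B|%:R|
    = (x \in A)%:R / #|A|%:R + (x \in B)%:R / #|B|%:R - 2 * ((x \in A)%:R / #|B|%:R) :> R.
  have [xA | xA] := boolP (x \in A); last first.
    by rewrite !mul0r sub0r add0r mulr0 subr0 normrN ger0_norm // divr_ge0.
  rewrite (fintype.subsetP AB x xA) !mul1r ger0_norm; last first.
    by rewrite subr_ge0 lef_pV2 ?posrE ?ltr0n // ler_nat.
  by rewrite mulr2n mulrDl mul1r opprD addrA addrK.
have sum_ind (C : {set T}) : \sum_x ((x \in C)%:R : R) = #|C|%:R.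
  rewrite -sum1_card natr_sum [RHS]big_mkcond.
  by apply: eq_bigr => x _; case: (x \in C).
rewrite /dTV; under eq_bigr => x _ do rewrite muE nuE dist.
rewrite sumrB big_split /= -!mulr_suml -mulr_sumr -mulr_suml !sum_ind.
rewrite !mulfV ?pnatr_eq0 -?lt0n // cardsD (finset.setIidPr AB) natrB //.
by field; rewrite pnatr_eq0 -lt0n.
Qed.

Section Incidence.
Variables n m d1 d2 : nat.

Definition regular_hypergraphs : {set hypergraph n m} := [set H | regular_hypergraph d1 d2 H].

Definition incidence_image : {set bigraph n m} :=
  [set incidence H | H in regular_hypergraphs].

Lemma incidence_inj : injective (@incidence n m).
Proof.
move=> H1 H2 eqH; apply/ffunP => l; apply/setP => i.
by have := congr1 (fun G : bigraph n m => (i, l) \in G) eqH; rewrite !inE.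
Qed.

Lemma incidence_biregular (H : hypergraph n m) :
  regular_hypergraph d1 d2 H -> biregular d1 d2 (incidence H).
Proof.
case/andP=> /andP[_ /forallP cardH] /forallP degH; apply/biregularP.
split=> x; apply/eqP; [rewrite -(eqP (degH x)) | rewrite -(eqP (cardH x))];
  by apply/eqP/eq_card => y; rewrite !inE.
Qed.

Lemma incidence_image_subset : incidence_image \subset biregular_graphs n m d1 d2.
Proof.
apply/fintype.subsetP => _ /imsetP[H regH ->]; rewrite inE in regH; rewrite inE.
exact: incidence_biregular.
Qed.

Lemma biregular_twin_free_incidence (G : bigraph n m) :
  biregular d1 d2 G -> injective (nbhd2 G) -> G \in incidence_image.
Proof.
move=> bG nbhd2_inj; apply/imsetP; exists [ffun l => nbhd2 G l].
  rewrite inE; apply/andP; split; first (apply/andP; split).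
  - by apply/injectiveP => j k; rewrite !ffunE; apply: nbhd2_inj.
  - by apply/forallP => l; rewrite ffunE (card_nbhd2 bG).
  - apply/forallP => i; rewrite -(card_nbhd1 bG i); apply/eqP/eq_card => l.
    by rewrite !inE ffunE inE.
by apply/setP => -[i l]; rewrite !inE ffunE inE.
Qed.

Lemma card_incidence_fibre (G : bigraph n m) :
  #|[set H | regular_hypergraph d1 d2 H && (incidence H == G)]|
  = (G \in incidence_image).
Proof.
have [/imsetP[H regH ->] | notI] := boolP (G \in incidence_image).
  rewrite inE in regH; rewrite (_ : [set _ | _] = [set H]) ?cards1 //.
  apply/setP => H'; rewrite !inE (inj_eq incidence_inj).
  by have [->|] := eqVneq H' H; rewrite ?regH ?andbF.
apply/eqP; rewrite cards_eq0; apply/eqP/setP => H; rewrite !inE.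
by apply: contraNF notI => /andP[regH /eqP <-]; apply: imset_f; rewrite inE.
Qed.

Lemma mu_hyp_uniform (R : realType) (G : bigraph n m) :
  mu_hyp R d1 d2 G = (G \in incidence_image)%:R / #|incidence_image|%:R.
Proof. by rewrite /mu_hyp card_incidence_fibre card_imset //; apply: incidence_inj. Qed.

Lemma card_biregular_not_incidence_le :
  (#|biregular_graphs n m d1 d2 :\: incidence_image|
   <= \sum_(p : 'I_m * 'I_m | p.1 != p.2) #|twinned n d1 d2 p.1 p.2|)%N.
Proof.
rewrite -sum1_card; under [X in (_ <= X)%N]eq_bigr do rewrite -sum1_card.
rewrite (exchange_big_dep predT) //= [X in (X <= _)%N]big_mkcond /=.
apply: leq_sum => G _; case: ifP => //; rewrite !inE => /andP[notI bG].
have /injectivePn[j [k jk eq_jk]] : ~~ injectiveb (nbhd2 G).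
  by apply: contra notI => /injectiveP; apply: biregular_twin_free_incidence.
by rewrite (bigD1 (j, k)) //= inE jk bG eq_jk eqxx.
Qed.

End Incidence.

Lemma pow_le_fact_expR (R : realType) (k : nat) : k%:R ^+ k <= k`!%:R * expR 1 ^+ k :> R.
Proof.
case: k => [|k]; first by rewrite fact0 mul1r !expr0.
rewrite -expRM_natl mulr1 mulrC -ler_pdivrMr ?ltr0n ?fact_gt0 //.
by apply: le_trans (expR_ge1Dxn k (ler0n _ _)); rewrite lerDr.
Qed.

Section TwinBound.
Variables (R : realType) (n m d1 d2 : nat).
Hypotheses (n_gt0 : (0 < n)%N) (d1_gt0 : (0 < d1)%N) (d2_gt0 : (0 < d2)%N).

Let q : R := (4%:R * expR 1 * d2%:R) / n%:R.

Lemma card_twinned_le_real (j k : 'I_m) : j != k ->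
  #|twinned n d1 d2 j k|%:R <= #|biregular_graphs n m d1 d2|%:R * q ^+ d2.
Proof.
move=> jk.
have twinned_sub : twinned n d1 d2 j k \subset biregular_graphs n m d1 d2.
  by apply/fintype.subsetP => G; rewrite !inE => /andP[].
have [le_4d2_n | lt_n_4d2] := leqP (4 * d2) n.
  rewrite /q expr_div_n mulrA ler_pdivlMr ?exprn_gt0 ?ltr0n //.
  rewrite -(@ler_pM2r _ d2`!%:R) ?ltr0n ?fact_gt0 //.
  have := card_twinned_mul_le jk d1_gt0 d2_gt0 le_4d2_n.
  rewrite -(ler_nat R) !natrM !natrX !natrM => /le_trans; apply.
  apply: le_trans (ler_wpM2l _ (pow_le_fact_expR R d2)) _.
    by rewrite mulr_ge0 ?exprn_ge0.
  by rewrite !exprMn; lra.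
have q_ge1 : 1 <= q.
  rewrite /q ler_pdivlMr ?ltr0n // mul1r; apply: (@le_trans _ _ (4 * d2)%:R).
    by rewrite ler_nat ltnW.
  by rewrite natrM -mulrA ler_pM2l ?ltr0n // ler_peMl ?ler0n // ltW // expR_gt1.
rewrite -[X in X <= _]mulr1; apply: ler_pM => //; last exact: exprn_ege1.
by rewrite ler_nat subset_leq_card.
Qed.

End TwinBound.

Lemma sum_card_twinned_le (R : realType) (n m d1 d2 : nat) :
  (0 < n)%N -> (0 < d2)%N -> (m * d2 = n * d1)%N ->
  (\sum_(p : 'I_m * 'I_m | p.1 != p.2) #|twinned n d1 d2 p.1 p.2|)%:R
  <= #|biregular_graphs n m d1 d2|%:R
     * (m%:R ^+ 2 * ((4%:R * expR 1 * d2%:R) / n%:R) ^+ d2) :> R.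
Proof.
move=> n_gt0 d2_gt0 m_d2.
set q := (4%:R * expR 1 * d2%:R) / n%:R; set b := #|biregular_graphs n m d1 d2|%:R.
have term_le (p : 'I_m * 'I_m) :
    (if p.1 != p.2 then #|twinned n d1 d2 p.1 p.2|%:R else 0) <= b * q ^+ d2 :> R.
  case: ifP => [jk | _]; last by rewrite mulr_ge0 ?exprn_ge0 ?divr_ge0 ?mulr_ge0 ?expR_ge0.
  have d1_gt0 : (0 < d1)%N.
    have m_gt0 : (0 < m)%N := leq_ltn_trans (leq0n _) (ltn_ord p.1).
    by move: (muln_gt0 m d2); rewrite m_gt0 d2_gt0 m_d2 muln_gt0 => /andP[].
  exact: card_twinned_le_real.
rewrite natr_sum big_mkcond /=; apply: le_trans (ler_sum _ (fun p _ => term_le p)) _.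
by rewrite sumr_const card_prod card_ord -[X in X <= _]mulr_natr natrM; lra.
Qed.

Theorem lemma6p9 (R : realType) (n m d1 d2 : nat) :
  (0 < n)%N -> (0 < d2)%N -> (m * d2 = n * d1)%N ->
  (exists H : hypergraph n m, regular_hypergraph d1 d2 H) ->
  dTV (@mu_hyp R n m d1 d2) (@mu_unif R n m d1 d2)
    <= ((n * d1)%:R / d2%:R) ^+ 2
       * ((4%:R * expR 1 * d2%:R) / n%:R) ^+ d2.
Proof.
move=> n_gt0 d2_gt0 m_d2 [H0 regH0].
have image_gt0 : (0 < #|incidence_image n m d1 d2|)%N.
  by apply/card_gt0P; exists (incidence H0); apply: imset_f; rewrite inE.
rewrite (dTV_uniform_subset (incidence_image_subset n m d1 d2) image_gt0
           (mu_hyp_uniform d1 d2 R) (fun _ => erefl)).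
rewrite ler_pdivrMr ?ltr0n ?(leq_trans image_gt0) ?subset_leq_card ?incidence_image_subset //.
have -> : (n * d1)%:R / d2%:R = m%:R :> R by rewrite -m_d2 natrM mulfK // pnatr_eq0 -lt0n.
rewrite mulrC; apply: le_trans _ (sum_card_twinned_le R n_gt0 d2_gt0 m_d2); rewrite ler_nat.
exact: card_biregular_not_incidence_le.
Qed.
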